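(* Let $n=rk$, $f:\mathbb{F}_{2^n}\to\mathbb{F}_{2^k}$, $i\in\{0,\dots,k-1\}$ and $b\in\mathbb{F}_{2^k}$. If $\gamma_1,\gamma_2,\gamma_3\in\mathbb{F}_{2^n}^*$ are $(i,b)$-Frobenius translators of $f$ with $\gamma_1+\gamma_2+\gamma_3\neq 0$, then $\gamma_1+\gamma_2+\gamma_3$ is an $(i,b)$-Frobenius translator of $f$.
   Context: For $n=rk$, a function $f:\mathbb{F}_{p^n}\to\mathbb{F}_{p^k}$, an element $\gamma\in\mathbb{F}_{p^n}^*$, an element $b\in\mathbb{F}_{p^k}$ and $i\in\{0,\dots,k-1\}$, $\gamma$ is called an $(i,b)$-Frobenius translator of $f$ if $f(x+u\gamma)-f(x)=u^{p^i}b$ for all $x\in\mathbb{F}_{p^n}$ and all $u\in\mathbb{F}_{p^k}$. Here $p=2$. *)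

From HB Require Import structures.
From mathcomp Require Import all_boot all_order all_algebra all_field.
Set Implicit Arguments. Unset Strict Implicit. Unset Printing Implicit Defensive.
Import GRing.Theory.
Local Open Scope ring_scope.

(* F_{2^n} is modelled by a finite field L of characteristic 2 with
   #|L| = 2^n; F_{2^k} (k | n) is its unique subfield of order 2^k,
   i.e. the set of x in L with x^(2^k) = x. *)
Definition in_subfield (L : fieldType) (k : nat) (x : L) : bool :=
  x ^+ (2 ^ k) == x.

Definition frobenius_translator (L : fieldType) (k : nat) (f : L -> L)
    (gamma : L) (i : nat) (b : L) : Prop :=
  gamma != 0 /\
  forall (x u : L), in_subfield k u ->
    f (x + u * gamma) - f x = u ^+ (2 ^ i) * b.

From HB Require Import structures.
From mathcomp Require Import all_boot all_order all_algebra all_field.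
Import GRing.Theory.
Local Open Scope ring_scope.

(* Telescoping f(x + u(g1 + g2 + g3)) - f(x) along the three shifts gives
   3 u^(2^i) b, which equals u^(2^i) b in characteristic 2. *)

Lemma shift_diff_add {V W : zmodType} {f : V -> W} {a1 a2 : V} {c1 c2 : W} :
    (forall x, f (x + a1) - f x = c1) -> (forall x, f (x + a2) - f x = c2) ->
  forall x, f (x + (a1 + a2)) - f x = c1 + c2.
Proof.
move=> d1 d2 x.
by rewrite addrA -(d1 x) -(d2 (x + a1)) [RHS]addrC addrA subrK.
Qed.

Lemma frobenius_translator_add3 (L : fieldType) (k : nat) (f : L -> L)
    (i : nat) (b g1 g2 g3 : L) :
    2%N \in [pchar L] ->
    frobenius_translator k f g1 i b ->
    frobenius_translator k f g2 i b ->
    frobenius_translator k f g3 i b ->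
    g1 + g2 + g3 != 0 ->
  frobenius_translator k f (g1 + g2 + g3) i b.
Proof.
move=> pchar2 [_ t1] [_ t2] [_ t3] nz; split=> // x u uk.
have d1 y := t1 y u uk; have d2 y := t2 y u uk; have d3 y := t3 y u uk.
have d123 := shift_diff_add (shift_diff_add d1 d2) d3.
by rewrite !mulrDr d123 addrr_pchar2 // add0r.
Qed.

Theorem corollary1 (L : finFieldType) (r k : nat) (f : L -> L) (i : nat)
    (b g1 g2 g3 : L) :
  2%N \in [pchar L] ->
  #|L| = (2 ^ (r * k))%N ->
  (forall x : L, in_subfield k (f x)) ->
  (i < k)%N ->
  in_subfield k b ->
  frobenius_translator k f g1 i b ->
  frobenius_translator k f g2 i b ->
  frobenius_translator k f g3 i b ->
  g1 + g2 + g3 != 0 ->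
  frobenius_translator k f (g1 + g2 + g3) i b.
Proof.
by move=> pchar2 _ _ _ _; exact: frobenius_translator_add3.
Qed.
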